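(* Let $\Lambda:\mathbb{R}\to[0,1]$ be a right-continuous decreasing function, $n\in\mathbb N$, $\Theta$ a convex set, $f:\Theta\times\mathbb{R}^n\to\mathbb{R}$, $\mathbf L\in(L^\infty)^n$ such that $f(\boldsymbol\theta,\mathbf L)\in L^\infty$ for all $\boldsymbol\theta\in\Theta$, and $\ell\in\mathbb{R}$. Then for every $\boldsymbol\theta\in\Theta$, $\mathrm{ES}_\Lambda(f(\boldsymbol\theta,\mathbf L))\le\ell$ if and only if $\mathrm{ES}_{\Lambda(\ell)}(f(\boldsymbol\theta,\mathbf L))\le\ell$.
   Context: $(\Omega,\mathcal F,\mathbb P)$ is an atomless probability space, $L^\infty$ the essentially bounded random variables; ''decreasing'' is weak; $\wedge=\min$. For $\alpha\in[0,1]$: $\mathrm{VaR}_\alpha(X)=\inf\{x\in\mathbb{R}:\mathbb P(X\le x)\ge\alpha\}$; $\mathrm{ES}_\alpha(X)=\frac{1}{1-\alpha}\int_\alpha^1\mathrm{VaR}_\beta(X)\,\mathrm d\beta$ for $\alpha<1$, $\mathrm{ES}_1(X)=\mathrm{VaR}_1(X)$; for decreasing $\Lambda:\mathbb{R}\to[0,1]$, $\mathrm{ES}_\Lambda(X)=\sup_{x\in\mathbb{R}}\left(\mathrm{ES}_{\Lambda(x)}(X)\wedge x\right)$, $X\in L^\infty$. *)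

From HB Require Import structures.
From mathcomp Require Import all_boot all_order all_algebra.
From mathcomp Require Import all_classical all_reals all_analysis.
Set Implicit Arguments. Unset Strict Implicit. Unset Printing Implicit Defensive.
Import Order.TTheory GRing.Theory Num.Theory.
Import numFieldNormedType.Exports.
Local Open Scope classical_set_scope.
Local Open Scope ring_scope.
Local Open Scope ereal_scope.

Section Defs.
Context {R : realType}.

Definition atomless {d : measure_display} {T : measurableType d}
  (P : probability T R) : Prop :=
  forall A : set T, measurable A -> 0 < P A ->
    exists B : set T, [/\ measurable B, B `<=` A, 0 < P B & P B < P A].

Definition Linfty {d : measure_display} {T : measurableType d}
  (P : probability T R) (X : T -> R) : Prop :=
  measurable_fun setT X /\
  exists M : R, {ae P, forall w, (`|X w| <= M)%R}.

(* VaR_alpha(X) = inf {x in R | P(X <= x) >= alpha}, as an extended real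
   (it is -oo for alpha = 0). *)
Definition VaR {d : measure_display} {T : measurableType d}
  (P : probability T R) (alpha : R) (X : T -> R) : \bar R :=
  ereal_inf [set x%:E | x in [set x : R | alpha%:E <= P [set w | (X w <= x)%R]]].

Definition ES {d : measure_display} {T : measurableType d}
  (P : probability T R) (alpha : R) (X : T -> R) : \bar R :=
  if (alpha < 1)%R then
    ((1 - alpha)^-1)%:E *
      \int[lebesgue_measure]_(beta in `[alpha, 1%R]) VaR P beta X
  else VaR P 1 X.

Definition ES_Lambda {d : measure_display} {T : measurableType d}
  (P : probability T R) (Lambda : R -> R) (X : T -> R) : \bar R :=
  ereal_sup (range (fun x : R => mine (ES P (Lambda x) X) x%:E)).

End Defs.

(* Writing ES_a(X) for a < 1 as the average over [a, 1] of the bounded,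
   nondecreasing quantile function b |-> VaR_b(X) shows that a |-> ES_a(X) is
   nondecreasing on [0, 1] and that a strict inequality l < ES_a0(X) persists
   for all a slightly below a0 (at a0 = 1 this uses that VaR_b(X) > c for b
   close to 1 as soon as VaR_1(X) > c).  If ES_Lambda(l)(X) <= l, then every
   term min(ES_Lambda(x)(X), x) of the supremum is <= l: for x <= l through
   x, for x > l because Lambda(x) <= Lambda(l).  If ES_Lambda(l)(X) > l, right
   continuity of the decreasing Lambda gives x > l with Lambda(x) just below
   Lambda(l), hence min(ES_Lambda(x)(X), x) > l. *)

From HB Require Import structures.
From mathcomp Require Import all_boot all_order all_algebra.
From mathcomp Require Import all_classical all_reals all_analysis.
From mathcomp Require Import lra measurable_realfun.
Import Order.TTheory GRing.Theory Num.Theory.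
Import numFieldNormedType.Exports.
Local Open Scope classical_set_scope.
Local Open Scope ring_scope.

Section lebesgue_measure_itv_bnd.
Context {R : realType}.
Local Notation mu := (@lebesgue_measure R).

Lemma lebesgue_measure_itv_bnd_lty (x y : bool) (a b : R) :
  (mu [set` Interval (BSide x a) (BSide y b)] < +oo)%E.
Proof. by rewrite lebesgue_measure_itv; case: ifP => _ //=; rewrite -EFinB ltry. Qed.

Lemma fine_lebesgue_measure_itv_bnd (x y : bool) (a b : R) : a <= b ->
  fine (mu [set` Interval (BSide x a) (BSide y b)]) = b - a.
Proof.
move=> ab; rewrite lebesgue_measure_itv /=; case: ifPn => [_|]; first by rewrite -EFinB.
by rewrite lte_fin -leNgt => ba; rewrite (@le_anti _ _ a b) ?ab ?subrr.
Qed.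

End lebesgue_measure_itv_bnd.

Section expected_shortfall.
Context {R : realType} {d : measure_display} {T : measurableType d}
  (P : probability T R) (X : T -> R).

Lemma le_VaR (b b' : R) : b <= b' -> (VaR P b X <= VaR P b' X)%E.
Proof.
move=> bb'; apply: le_ereal_inf => _ [x Px <-]; exists x => //=.
by apply: le_trans Px; rewrite lee_fin.
Qed.

Local Notation mu := (@lebesgue_measure R).
Hypothesis mX : measurable_fun setT X.

Lemma measurable_sublevel (c : R) : measurable [set w | X w <= c].
Proof.
have := mX measurableT _ (measurable_itv `]-oo, c]); rewrite setTI.
by congr measurable; apply/seteqP; split => w /=; rewrite in_itv.
Qed.

Lemma VaR_ge_sublevel (b c : R) :
  (P [set w | (X w <= c)%R] < b%:E)%E -> (c%:E <= VaR P b X)%E.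
Proof.
move=> Pc; apply/ereal_infP => _ [x Px <-]; rewrite lee_fin leNgt.
apply/negP => xc; suff : (b%:E < b%:E)%E by rewrite ltxx.
apply: le_lt_trans Px (le_lt_trans _ Pc).
apply: le_measure; rewrite ?inE; try exact: measurable_sublevel.
by move=> w /= Xw; apply: le_trans Xw (ltW xc).
Qed.

Lemma VaR_ge_near1 (c : R) : (c%:E < VaR P 1 X)%E ->
  exists2 p : R, 0 <= p < 1 & forall b, p < b -> (c%:E <= VaR P b X)%E.
Proof.
move=> cV; have Pc1 : (P [set w | (X w <= c)%R] < 1)%E.
  rewrite ltNge; apply: contraTN cV => Pc; rewrite -leNgt.
  by apply: ereal_inf_lbound; exists c.
have Pc_fin : P [set w | X w <= c] \is a fin_num.
  by rewrite ge0_fin_numE // (lt_trans Pc1) ?ltry.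
exists (fine (P [set w | X w <= c])); first by rewrite fine_ge0 // -lte_fin fineK.
by move=> b Pb; apply: VaR_ge_sublevel; rewrite -(fineK Pc_fin) lte_fin.
Qed.

Variable M : R.
Hypothesis X_bounded : {ae P, forall w, `|X w| <= M}.

Lemma probability_sublevel_bound : P [set w | X w <= M] = 1%E.
Proof.
have [N [mN PN0 sN]] := X_bounded.
have mM := measurable_sublevel M.
apply/le_anti; rewrite probability_le1 //=.
rewrite -[leLHS](sube0 1) -PN0 -probability_setC //.
apply: le_measure; rewrite ?inE //; first exact: measurableC.
move=> w Nw /=; apply: le_trans (ler_norm _) _.
by apply: contrapT => XM; apply: Nw; exact: sN.
Qed.

Lemma probability_sublevel_lt_Nbound (x : R) : x < - M ->
  P [set w | X w <= x] = 0%E.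
Proof.
have [N [mN PN0 sN]] := X_bounded.
move=> xM; apply/le_anti; rewrite measure_ge0 andbT -PN0.
apply: le_measure; rewrite ?inE //; first exact: measurable_sublevel.
move=> w /= Xw; apply: sN => /=; rewrite ler_norml => /andP[MX _].
by move: xM; rewrite ltNge (le_trans MX Xw).
Qed.

Lemma bound_ge0 : 0 <= M.
Proof.
rewrite leNgt; apply/negP => M0.
have := probability_sublevel_bound.
rewrite probability_sublevel_lt_Nbound; last by rewrite -subr_lt0 opprK -mulr2n mulrn_wlt0.
by move=> -[] /esym/eqP; rewrite oner_eq0.
Qed.

Lemma VaR_le_bound (b : R) : b <= 1 -> (VaR P b X <= M%:E)%E.
Proof.
move=> b1; apply: ereal_inf_lbound; exists M => //=.
by rewrite probability_sublevel_bound lee_fin.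
Qed.

Lemma VaR_ge_Nbound (b : R) : 0 < b -> ((- M)%:E <= VaR P b X)%E.
Proof.
move=> b0; apply/ereal_infP => _ [x Px <-]; rewrite lee_fin leNgt.
apply/negP => /probability_sublevel_lt_Nbound Px0.
by move: Px; rewrite /mkset Px0 lee_fin leNgt b0.
Qed.

(* The real-valued version of [b |-> VaR_b(X)], extended by [-M] and [M]
   outside [(0, 1]] (where VaR is infinite) so that it is nondecreasing on
   the whole line. *)
Definition quantile (b : R) : R :=
  if b <= 0 then - M else if 1 < b then M else fine (VaR P b X).

Lemma VaR_quantile (b : R) : 0 < b -> b <= 1 -> VaR P b X = (quantile b)%:E.
Proof.
move=> b0 b1; rewrite /quantile leNgt b0 ltNge b1 /= fineK // fin_numElt.
rewrite (lt_le_trans _ (VaR_ge_Nbound _ b0)) ?ltNyr //.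
by rewrite (le_lt_trans (VaR_le_bound _ b1)) ?ltry.
Qed.

Lemma quantile_bound (b : R) : - M <= quantile b <= M.
Proof.
have M0 := bound_ge0; rewrite /quantile.
case: ifPn => [_|]; first by rewrite lexx (ge0_cp M0).
case: ifPn => [_|]; first by rewrite lexx (ge0_cp M0).
rewrite -leNgt -ltNge => b1 b0; have := VaR_ge_Nbound _ b0; have := VaR_le_bound _ b1.
by rewrite (VaR_quantile _ b0 b1) !lee_fin => -> ->.
Qed.

Lemma nondecreasing_quantile : {homo quantile : b b' / b <= b'}.
Proof.
move=> b b' bb'; case: (ltP 0 b) => [b0|b0]; last first.
  by rewrite /quantile b0; case/andP: (quantile_bound b').
case: (leP b' 1) => [b'1|b'1]; last first.
  have -> : quantile b' = M by rewrite /quantile leNgt (lt_le_trans b0 bb') b'1.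
  by case/andP: (quantile_bound b).
rewrite -lee_fin -VaR_quantile ?(le_trans bb') // -VaR_quantile ?(lt_le_trans b0) //.
exact: le_VaR.
Qed.

Lemma integrable_quantile (D : set R) : measurable D -> (mu D < +oo)%E ->
  mu.-integrable D (EFin \o quantile).
Proof.
move=> mD muD; apply: measurable_bounded_integrable => //.
  exact: nondecreasing_measurable nondecreasing_quantile.
exists M; split; first by rewrite num_real.
move=> r Mr x _ /=; rewrite (le_trans _ (ltW Mr)) // ler_norml.
by case/andP: (quantile_bound x) => -> ->.
Qed.

Let integrable_itv_quantile (x y : bool) (a b : R) :
  mu.-integrable [set` Interval (BSide x a) (BSide y b)] (EFin \o quantile).
Proof.
by apply: integrable_quantile => //; exact: lebesgue_measure_itv_bnd_lty.
Qed.

Let itv_bnd_le (x y : bool) (a b t : R) :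
  [set` Interval (BSide x a) (BSide y b)] t -> a <= t <= b.
Proof.
by rewrite /= in_itv /=; case: x; case: y => /= /andP[ta tb];
  rewrite ?ta ?tb ?(ltW ta) ?(ltW tb).
Qed.

Let integrable_itv_cst (x y : bool) (a b c : R) :
  mu.-integrable [set` Interval (BSide x a) (BSide y b)] (EFin \o fun=> c).
Proof.
apply: measurable_bounded_integrable => //; first exact: lebesgue_measure_itv_bnd_lty.
exact: bounded_cst.
Qed.

Lemma Rintegral_quantile_le (x y : bool) (a b c : R) : a <= b ->
  (forall t, a <= t <= b -> quantile t <= c) ->
  Rintegral mu [set` Interval (BSide x a) (BSide y b)] quantile <= c * (b - a).
Proof.
move=> ab qc; rewrite -(fine_lebesgue_measure_itv_bnd x y _ _ ab) -Rintegral_cst //.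
by apply: le_Rintegral => // t /itv_bnd_le; exact: qc.
Qed.

Lemma Rintegral_quantile_ge (x y : bool) (a b c : R) : a <= b ->
  (forall t, a <= t <= b -> c <= quantile t) ->
  c * (b - a) <= Rintegral mu [set` Interval (BSide x a) (BSide y b)] quantile.
Proof.
move=> ab cq; rewrite -(fine_lebesgue_measure_itv_bnd x y _ _ ab) -Rintegral_cst //.
by apply: le_Rintegral => // t /itv_bnd_le; exact: cq.
Qed.

Definition quantile_tail (a : R) : R := Rintegral mu `[a, 1]%classic quantile.

Lemma quantile_tail_split (a b : R) : a <= b -> b <= 1 ->
  quantile_tail a = Rintegral mu `[a, b[ quantile + quantile_tail b.
Proof.
move=> ab b1; rewrite /quantile_tail.
have abU : `[a, 1]%classic = `[a, b[%classic `|` `[b, 1]%classic :> set R.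
  by apply: itv_bndbnd_setU; rewrite bnd_simp.
rewrite abU Rintegral_setU //; first by rewrite -abU; exact: integrable_itv_quantile.
apply/disj_setPS => t [] /=; rewrite !in_itv /= => /andP[_ tb] /andP[bt _].
by have := lt_le_trans tb bt; rewrite ltxx.
Qed.

Lemma ES_quantile_tail (a : R) : 0 <= a -> a < 1 ->
  ES P a X = ((1 - a)^-1 * quantile_tail a)%:E.
Proof.
move=> a0 a1; rewrite /ES a1 EFinM; congr (_ * _)%E.
have qVaR : {in `]a, 1]%classic, EFin \o quantile =1 fun b => VaR P b X}.
  move=> t /set_mem /=; rewrite in_itv /= => /andP[ta t1].
  by rewrite VaR_quantile // (le_lt_trans a0 ta).
have mq : measurable_fun `]a, 1]%classic (fun t => (quantile t)%:E).
  apply/measurable_EFinP; apply: nondecreasing_measurable => //.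
  exact: nondecreasing_quantile.
rewrite -integral_itv_obnd_cbnd; last exact: eq_measurable_fun _ qVaR mq.
under eq_integral => t tD do rewrite -(qVaR t tD).
rewrite integral_itv_obnd_cbnd // /quantile_tail /Rintegral fineK //.
by apply: integrable_fin_num => //; exact: integrable_itv_quantile.
Qed.

Lemma ES1_quantile : ES P 1 X = (quantile 1)%:E.
Proof. by rewrite /ES ltxx VaR_quantile. Qed.

Lemma le_ES (a b : R) : 0 <= a -> a <= b -> b <= 1 -> (ES P a X <= ES P b X)%E.
Proof.
move=> a0 ab b1; have a1 := le_trans ab b1.
have [b_lt1|b_eq1] := ltP b 1; last first.
  rewrite (@le_anti _ _ b 1) ?b1 // ES1_quantile.
  have [a_lt1|a_eq1] := ltP a 1; last by rewrite (@le_anti _ _ a 1) ?a1 // ES1_quantile.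
  rewrite ES_quantile_tail // lee_fin ler_pdivrMl ?subr_gt0 // mulrC.
  by apply: Rintegral_quantile_le => // t /andP[_ t1]; exact: nondecreasing_quantile.
have a_lt1 := le_lt_trans ab b_lt1.
rewrite !ES_quantile_tail ?(le_trans a0 ab) // lee_fin.
have head_le : Rintegral mu `[a, b[%classic quantile <= quantile b * (b - a).
  by apply: Rintegral_quantile_le => // t /andP[_ tb]; exact: nondecreasing_quantile.
have tail_ge : quantile b * (1 - b) <= quantile_tail b.
  apply: Rintegral_quantile_ge; first exact: ltW.
  by move=> t /andP[bt _]; exact: nondecreasing_quantile.
have cross : (1 - b) * quantile_tail a <= (1 - a) * quantile_tail b.
  rewrite (quantile_tail_split _ _ ab (ltW b_lt1)).
  have : 0 <= 1 - b by rewrite subr_ge0 ltW.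
  have : 0 <= b - a by rewrite subr_ge0.
  nra.
by rewrite ler_pdivrMl ?subr_gt0 // mulrCA ler_pdivlMl ?subr_gt0.
Qed.

Lemma ES_gt_near_left_lt1 (a0 l : R) : 0 <= a0 -> a0 < 1 ->
  (l%:E < ES P a0 X)%E -> exists2 e : R, 0 < e &
    forall a, 0 <= a <= a0 -> a0 - a < e -> (l%:E < ES P a X)%E.
Proof.
move=> a00 a01; rewrite ES_quantile_tail // lte_fin ltr_pdivlMl ?subr_gt0 // => lJ.
have M0 := bound_ge0; have l_norm := ler_norm l.
have D0 : 0 < M + `|l| + 1 by rewrite ltr_wpDl // addr_ge0.
(* Over [[a, a0[] the quantile is at least [-M], so shortening the margin
   [quantile_tail a0 - (1 - a0) l] costs at most [(a0 - a) (M + |l|)]. *)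
exists ((quantile_tail a0 - (1 - a0) * l) / (M + `|l| + 1)).
  by rewrite divr_gt0 // subr_gt0.
move=> a /andP[a0' aa0]; rewrite ltr_pdivlMr // => close.
have a1 := le_lt_trans aa0 a01.
rewrite ES_quantile_tail // lte_fin ltr_pdivlMl ?subr_gt0 //.
rewrite (quantile_tail_split _ _ aa0 (ltW a01)).
have head_ge : - M * (a0 - a) <= Rintegral mu `[a, a0[%classic quantile.
  by apply: Rintegral_quantile_ge => // t _; case/andP: (quantile_bound t).
have : 0 <= a0 - a by rewrite subr_ge0.
nra.
Qed.

Lemma ES1_gt_near_left (l : R) : (l%:E < ES P 1 X)%E -> exists2 p : R, p < 1 &
  forall a, p < a -> a <= 1 -> (l%:E < ES P a X)%E.
Proof.
rewrite ES1_quantile lte_fin => lq1; pose c := (l + quantile 1) / 2.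
have [p /andP[p0 p1] VaRc] : exists2 p, 0 <= p < 1 &
    forall b, p < b -> (c%:E <= VaR P b X)%E.
  by apply: VaR_ge_near1; rewrite VaR_quantile // lte_fin /c; lra.
exists p => // a pa a1.
have qc : forall t, a <= t <= 1 -> c <= quantile t.
  move=> t /andP[ta t1]; rewrite -lee_fin -VaR_quantile //; last lra.
  by apply: VaRc; lra.
have lc : l < c by rewrite /c; lra.
have [a_lt1|a_eq1] := ltP a 1; last first.
  rewrite (@le_anti _ _ a 1) ?a1 // ES1_quantile lte_fin.
  by apply: lt_le_trans lc (qc 1 _); rewrite a1 lexx.
rewrite ES_quantile_tail ?lte_fin ?ltr_pdivlMl ?subr_gt0 //; last lra.
have := Rintegral_quantile_ge true false _ _ _ (ltW a_lt1) qc.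
have : 0 < 1 - a by rewrite subr_gt0.
rewrite -/(quantile_tail a); nra.
Qed.

Lemma ES_gt_near_left (a0 l : R) : 0 <= a0 <= 1 ->
  (l%:E < ES P a0 X)%E -> exists2 e : R, 0 < e &
    forall a, 0 <= a <= a0 -> a0 - a < e -> (l%:E < ES P a X)%E.
Proof.
move=> /andP[a00 a01]; have [a0_lt1|a0_eq1] := ltP a0 1.
  exact: ES_gt_near_left_lt1.
rewrite (@le_anti _ _ a0 1) ?a01 // => /ES1_gt_near_left[p p1 lES].
exists (1 - p); first by rewrite subr_gt0.
by move=> a /andP[_ a1] close; apply: lES => //; lra.
Qed.

End expected_shortfall.

Section sup_mine_level.
Context {R : realType} {g : R -> \bar R} {Lambda : R -> R}.
Hypothesis Lambda01 : forall x, 0 <= Lambda x <= 1.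
Hypothesis Lambda_decr : forall x y, x <= y -> Lambda y <= Lambda x.
Hypothesis Lambda_rc : forall x, Lambda @ at_right x --> Lambda x.
Hypothesis g_nondecreasing : forall a b : R, 0 <= a -> a <= b -> b <= 1 -> (g a <= g b)%E.
Hypothesis g_gt_near_left : forall a0 l : R, 0 <= a0 <= 1 -> (l%:E < g a0)%E ->
  exists2 e : R, 0 < e & forall a : R, 0 <= a <= a0 -> a0 - a < e -> (l%:E < g a)%E.

Lemma ereal_sup_mine_le (l : R) :
  (ereal_sup (range (fun x => mine (g (Lambda x)) x%:E)) <= l%:E)%E <->
  (g (Lambda l) <= l%:E)%E.
Proof.
split => [sup_le|gl]; last first.
  apply: ge_ereal_sup => _ [x _ <-]; rewrite ge_min.
  have [xl|lx] := leP x l; first by rewrite lee_fin xl orbT.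
  rewrite (le_trans _ gl) // g_nondecreasing //; first by case/andP: (Lambda01 x).
    exact/Lambda_decr/ltW.
  by case/andP: (Lambda01 l).
rewrite leNgt; apply/negP => /(g_gt_near_left _ _ (Lambda01 l))[e e0 near_g].
have : \forall x \near l^'+, l < x /\ `|Lambda l - Lambda x| < e.
  near=> x; split; first by near: x; exact: nbhs_right_gt.
  by near: x; exact: (cvgrPdist_lt _ _).1 (Lambda_rc l) e e0.
move=> /filter_ex[x [lx Lx]].
have lgx : (l%:E < g (Lambda x))%E.
  apply: near_g; last exact: le_lt_trans (ler_norm _) Lx.
  by case/andP: (Lambda01 x) => -> _; rewrite Lambda_decr // ltW.
suff : (l%:E < l%:E)%E by rewrite ltxx.
apply: lt_le_trans sup_le; apply: (@lt_le_trans _ _ (mine (g (Lambda x)) x%:E)).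
  by rewrite lt_min lgx lte_fin.
by apply: ereal_sup_ubound; exists x.
Unshelve. all: by end_near.
Qed.

End sup_mine_level.

Theorem proposition4 (R : realType) (d : measure_display) (T : measurableType d)
  (P : probability T R) (Patomless : atomless P)
  (Lambda : R -> R)
  (Lambda01 : forall x, 0 <= Lambda x <= 1)
  (Lambda_decr : forall x y, x <= y -> Lambda y <= Lambda x)
  (Lambda_rc : forall x, Lambda @ at_right x --> Lambda x)
  (n : nat) (E : lmodType R) (Theta : set E) (Theta_convex : convex_set Theta)
  (f : E -> 'rV[R]_n -> R) (L : T -> 'rV[R]_n)
  (L_Linfty : forall i : 'I_n, Linfty P (fun w => L w 0 i))
  (fL_Linfty : forall theta, Theta theta -> Linfty P (fun w => f theta (L w)))
  (l : R) :
  forall theta, Theta theta ->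
    (ES_Lambda P Lambda (fun w => f theta (L w)) <= l%:E)%E <->
    (ES P (Lambda l) (fun w => f theta (L w)) <= l%:E)%E.
Proof.
move=> theta Ptheta; have [mX [M X_bounded]] := fL_Linfty theta Ptheta.
exact: ereal_sup_mine_le Lambda01 Lambda_decr Lambda_rc
  (le_ES _ _ mX _ X_bounded) (ES_gt_near_left _ _ mX _ X_bounded) l.
Qed.
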